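(* Let $\mathcal{H}$ be a hypertree, $B$ a basic set of $\mathcal{H}$, and $u,v$ elements of $B$ lying in different connected components of the 2-section of $\overline{\mathcal{H}_B}$. Then $B=\bigcup_{T\in\tau(\mathcal{H})} V(T[u,v])$, where $\tau(\mathcal{H})$ is the set of all host trees of $\mathcal{H}$ and $T[u,v]$ is the path from $u$ to $v$ in $T$.
   Context: A hypergraph $\mathcal{H}$ has a finite vertex set $V(\mathcal{H})$ and a finite family of nonempty subsets (edges). A host tree is a tree on $V(\mathcal{H})$ in which every edge induces a connected subgraph; a hypertree is a hypergraph with a host tree. For $A\subseteq V(\mathcal{H})$, $\overline{\mathcal{H}_A}$ is the hypergraph on $V(\mathcal{H})$ whose edges are the edges of $\mathcal{H}$ not containing $A$. The 2-section of a hypergraph is the graph on its vertices where two distinct vertices are adjacent iff some edge contains both. A union of sets is connected if the intersection graph of the sets is connected. $Comp(\mathcal{H})$ is the hypergraph without repeated edges on $V(\mathcal{H})$ whose edges are $V(\mathcal{H})$, all singletons, and all proper subsets obtainable from edges of $\mathcal{H}$ by repeated nonempty intersections and connected unions; a basic set is an edge of $Comp(\mathcal{H})$ with more than one vertex that is not a connected union of strictly smaller edges of $Comp(\mathcal{H})$. *)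

From mathcomp Require Import all_boot.
Set Implicit Arguments. Unset Strict Implicit. Unset Printing Implicit Defensive.

(* A hypergraph on the finite vertex type V is an edge family E : {set {set V}}
   (repetitions of edges are irrelevant for all notions below). *)

Section Hyper.
Variable V : finType.

Definition gadj (T : {set {set V}}) : rel V := fun x y => [set x; y] \in T.

Definition is_tree (T : {set {set V}}) : Prop :=
  (forall e, e \in T -> #|e| = 2) /\
  (forall x y, connect (gadj T) x y) /\
  (* acyclic: no simple cycle of length >= 3 *)
  (forall (x : V) (p : seq V), 2 <= size p -> uniq (x :: p) -> ~~ cycle (gadj T) (x :: p)).

(* vertex set of the path T[u,v] (unique in a tree) *)
Definition on_path (T : {set {set V}}) (u v w : V) : Prop :=
  exists p : seq V, [/\ path (gadj T) u p, last u p = v, uniq (u :: p) & w \in u :: p].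

Definition host_tree (E : {set {set V}}) (T : {set {set V}}) : Prop :=
  is_tree T /\
  forall e, e \in E -> forall x y, x \in e -> y \in e ->
    connect [rel a b | [&& gadj T a b, a \in e & b \in e]] x y.

Definition hypertree (E : {set {set V}}) : Prop := exists T, host_tree E T.

Definition connected_family (F : {set {set V}}) : Prop :=
  forall X Y, X \in F -> Y \in F ->
    connect [rel A B | [&& A \in F, B \in F & A :&: B != set0]] X Y.

Inductive obtainable (E : {set {set V}}) : {set V} -> Prop :=
| ob_edge e : e \in E -> obtainable E e
| ob_inter A B : obtainable E A -> obtainable E B -> A :&: B != set0 ->
    obtainable E (A :&: B)
| ob_cunion (F : {set {set V}}) : F != set0 ->
    (forall X, X \in F -> obtainable E X) -> connected_family F ->
    obtainable E (\bigcup_(X in F) X).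

Definition comp_edge (E : {set {set V}}) (S : {set V}) : Prop :=
  S = setT \/ #|S| = 1 \/ (S \proper setT /\ obtainable E S).

Definition basic_set (E : {set {set V}}) (B : {set V}) : Prop :=
  [/\ comp_edge E B, 1 < #|B| &
    ~ exists F : {set {set V}},
        [/\ forall X, X \in F -> comp_edge E X /\ X \proper B,
            connected_family F & \bigcup_(X in F) X = B]].

Definition bar_edges (E : {set {set V}}) (A : {set V}) : {set {set V}} :=
  [set e in E | ~~ (A \subset e)].

Definition two_section (E : {set {set V}}) : rel V :=
  fun x y => (x != y) && [exists e in E, (x \in e) && (y \in e)].

End Hyper.

(* Backward inclusion: every edge of Comp(H) induces a connected subtree of
   every host tree, and a connected subset of a tree contains the unique path
   between any two of its vertices.
   Forward inclusion: on the u-v path of some host tree T, pick the first edge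
   ab leaving the component of u in the 2-section of H_B-bar. As a and b are
   not adjacent there, every hyperedge containing a and b contains B, hence w.
   Removing ab splits T into the side of a (containing u) and the side of b
   (containing v); reconnecting w to the other side (by wb if w is on the side
   of a, by aw otherwise) yields a host tree whose u-v path passes through w. *)

From mathcomp Require Import all_boot.
Set Implicit Arguments. Unset Strict Implicit. Unset Printing Implicit Defensive.

Section HostTrees.
Variable V : finType.
Implicit Types (T E : {set {set V}}) (S : {set V}) (x y z a b : V).

Lemma set2C x y : [set x; y] = [set y; x] :> {set V}.
Proof. exact: setUC. Qed.

Lemma gadj_sym T : symmetric (gadj T).
Proof. by move=> x y; rewrite /gadj set2C. Qed.

Lemma connect_gadj_sym T : connect_sym (gadj T).
Proof. exact/sym_connect_sym/gadj_sym. Qed.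

Lemma eq_set2_cases x y a b : [set x; y] = [set a; b] :> {set V} ->
  (x = a /\ y = b) \/ (x = b /\ y = a).
Proof.
move=> eq_xy_ab.
have: x \in [set a; b] by rewrite -eq_xy_ab set21.
have: y \in [set a; b] by rewrite -eq_xy_ab set22.
have: a \in [set x; y] by rewrite eq_xy_ab set21.
have: b \in [set x; y] by rewrite eq_xy_ab set22.
rewrite !in_set2; by do 4 (case/orP=> /eqP ?); subst; auto.
Qed.

Lemma gadj_setD1 T S x y : gadj (T :\ S) x y = ([set x; y] != S) && gadj T x y.
Proof. by rewrite /gadj in_setD1. Qed.

Lemma gadj_setD1_sub T S : subrel (gadj (T :\ S)) (gadj T).
Proof. by move=> x y; rewrite gadj_setD1 => /andP[]. Qed.

Lemma path_setD1_avoid T a z x (p : seq V) : path (gadj T) x p -> z \notin x :: p ->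
  path (gadj (T :\ [set a; z])) x p.
Proof.
move=> xp zNp; apply: (@sub_in_path _ (predC1 z) _ _ _ x p _ xp); last first.
  by apply/allP => y yp /=; apply: contraNneq zNp => <-.
move=> s t /= sNz tNz st; rewrite gadj_setD1 st andbT; rewrite !inE in sNz tNz.
apply: contraTneq (set22 a z) => <-; by rewrite in_set2 negb_or eq_sym sNz eq_sym tNz.
Qed.

Lemma connect_extra_edge (G G' : rel V) p q :
  (forall x y, G' x y -> G x y \/ (x = p /\ y = q) \/ (x = q /\ y = p)) ->
  forall x y, connect G' x y ->
  [\/ connect G x y, connect G x p /\ connect G q y | connect G x q /\ connect G p y].
Proof.
move=> G'_sub x y /connectP [s xs ->]; elim: s x xs => [|h s IH] x /=.
  by move=> _; apply: Or31; apply: connect0.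
case/andP => /G'_sub xh /IH IHs.
case: xh => [xh|[[-> eh]|[-> eh]]]; rewrite ?eh in IHs *.
- have xh1 := connect1 xh.
  case: IHs => [hl|[hp ql]|[hq pl]].
  + by apply: Or31; apply: connect_trans xh1 hl.
  + by apply: Or32; split => //; apply: connect_trans xh1 hp.
  + by apply: Or33; split => //; apply: connect_trans xh1 hq.
- by case: IHs => [ql|[qp ql]|[_ pl]]; [apply: Or32 | apply: Or32 | apply: Or31].
- by case: IHs => [pl|[_ ql]|[pq pl]]; [apply: Or33 | apply: Or31 | apply: Or33].
Qed.

Definition every_edge_bridge T :=
  forall s t, gadj T s t -> ~ connect (gadj (T :\ [set s; t])) s t.

Lemma tree_every_edge_bridge T : is_tree T -> every_edge_bridge T.
Proof.
move=> [edge2 [_ acyclic]] s t st /connectP [p0 /shortenP[p sp uniq_p _] tp].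
have st2 := edge2 _ st; rewrite cards2 in st2.
have neq_st : s != t by case: (s != t) st2.
case: p sp uniq_p tp => [|h [|h' r]] sp uniq_p tp.
- by rewrite tp eqxx in neq_st.
- by move: tp sp => /= <-; rewrite /= gadj_setD1 eqxx.
- apply: (negP (acyclic s [:: h, h' & r] isT uniq_p)).
  rewrite /cycle rcons_path -tp gadj_sym st andbT.
  exact: (sub_path (@gadj_setD1_sub T _) sp).
Qed.

Lemma every_edge_bridge_acyclic T : every_edge_bridge T ->
  forall x (p : seq V), 2 <= size p -> uniq (x :: p) -> ~~ cycle (gadj T) (x :: p).
Proof.
move=> bridges x [|h [|h' r]] // _ uniq_p; apply/negP.
rewrite /cycle rcons_path => /andP[/= /andP[xh hp] yx].
set y := last h' r in yx.
have xNp : x \notin [:: h, h' & r] by case/andP: uniq_p.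
have xNy : x != y by apply: contraNneq xNp => ->; rewrite in_cons mem_last orbT.
have hNy : h != y.
  by move: uniq_p => /= /and3P[_ hNp _]; apply: contraNneq hNp => ->; apply: mem_last.
apply: (bridges _ _ yx); rewrite connect_gadj_sym.
apply/connectP; exists [:: h, h' & r] => //=.
rewrite gadj_setD1 xh andbT; apply/andP; split.
  apply/negP => /eqP /eq_set2_cases [[xy _]|[_ hy]].
  - by rewrite xy eqxx in xNy.
  - by rewrite hy eqxx in hNy.
exact: (@path_setD1_avoid T y x h (h' :: r) hp xNp).
Qed.

Lemma mem_simple_path_walk T x (p q : seq V) : every_edge_bridge T ->
  path (gadj T) x p -> uniq (x :: p) -> path (gadj T) x q -> last x p = last x q ->
  {subset x :: p <= x :: q}.
Proof.
move=> bridges xp uniq_p xq eq_last z zp; apply/negPn/negP => zNq.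
have zNx : z != x by apply: contraNneq zNq => ->; apply: mem_head.
move: zp; rewrite in_cons (negPf zNx) /= => zp.
case/splitPr: zp xp uniq_p eq_last => p1 p2.
rewrite cat_path -cat_cons cat_uniq => /andP[xp1 /= /andP[sz zp2]] /and3P[_ disj _].
set s := last x p1 in sz *; rewrite last_cat /= => eq_last.
have [zNp1 p1Np2] := norP disj.
have sNp2 : s \notin z :: p2.
  rewrite in_cons negb_or; apply/andP; split.
    by apply: contraNneq zNp1 => <-; apply: mem_last.
  by apply: contra p1Np2 => sp2; apply/hasP; exists s => //; apply: mem_last.
(* If the walk misses z, it joins the ends of the path edge sz while avoiding that edge. *)
set F := T :\ [set s; z].
have xs : connect (gadj F) x s by apply/connectP; exists p1; rewrite ?path_setD1_avoid.
have zl : connect (gadj F) z (last x q).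
  apply/connectP; exists p2 => //.
  by rewrite /F set2C path_setD1_avoid.
have xl : connect (gadj F) x (last x q) by apply/connectP; exists q; rewrite ?path_setD1_avoid.
apply: (bridges _ _ sz); rewrite connect_gadj_sym in xs; rewrite connect_gadj_sym in zl.
exact: connect_trans xs (connect_trans xl zl).
Qed.

Definition induced T S : rel V := [rel x y | [&& gadj T x y, x \in S & y \in S]].

Definition connected_in T S := forall x y, x \in S -> y \in S -> connect (induced T S) x y.

Lemma induced_sym T S : symmetric (induced T S).
Proof. by move=> x y; rewrite /induced /= gadj_sym [(x \in S) && _]andbC. Qed.

Lemma induced_sub_gadj T S : subrel (induced T S) (gadj T).
Proof. by move=> x y /and3P[]. Qed.

Lemma induced_subset T S S' : S \subset S' -> subrel (induced T S) (induced T S').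
Proof. by move=> sub_SS' x y /and3P[xy xS yS]; apply/and3P; rewrite xy !(subsetP sub_SS'). Qed.

Lemma connect_induced_subset T S S' x y : S \subset S' ->
  connect (induced T S) x y -> connect (induced T S') x y.
Proof. by move=> sub_SS'; apply: connect_sub => s t /(induced_subset sub_SS')/connect1. Qed.

Lemma path_induced_all T S x (p : seq V) : path (induced T S) x p -> x \in S ->
  all [in S] (x :: p).
Proof.
elim: p x => [|y p IHp] x /=; first by rewrite andbT.
by case/andP=> /and3P[_ -> yS] yp _; apply: IHp.
Qed.

Lemma connected_in_convex T S x (p : seq V) : every_edge_bridge T -> connected_in T S ->
  path (gadj T) x p -> uniq (x :: p) -> x \in S -> last x p \in S -> all [in S] (x :: p).
Proof.
move=> bridges conS xp uniq_p xS lastS.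
case/connectP: (conS _ _ xS lastS) => q xq eq_last.
have xqT := sub_path (@induced_sub_gadj T S) xq.
apply/allP => z /(mem_simple_path_walk bridges xp uniq_p xqT eq_last).
exact: (allP (path_induced_all xq xS) z).
Qed.

Lemma connected_inI T S S' : every_edge_bridge T -> connected_in T S -> connected_in T S' ->
  connected_in T (S :&: S').
Proof.
move=> bridges conS conS' x y /setIP[xS xS'] /setIP[yS yS'].
case/connectP: (conS _ _ xS yS) => p0 /shortenP[p xp uniq_p _] ey; subst y.
have allS := path_induced_all xp xS.
have xpT := sub_path (@induced_sub_gadj T S) xp.
have allS' := connected_in_convex bridges conS' xpT uniq_p xS' yS'.
apply/connectP; exists p => //.
apply: (@sub_in_path _ [in S :&: S'] _ _ _ x p _ xp); last first.
  by apply/allP => z zp; rewrite inE (allP allS) ?(allP allS').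
by move=> s t sSS' tSS' /and3P[st _ _]; apply/and3P.
Qed.

Lemma connected_in_bigcup T (F : {set {set V}}) : (forall X, X \in F -> connected_in T X) ->
  connected_family F -> connected_in T (\bigcup_(X in F) X).
Proof.
move=> conF famF x y /bigcupP[X XF xX] /bigcupP[Y YF yY].
set U := \bigcup_(X in F) X.
have subU Z : Z \in F -> Z \subset U by move=> ZF; apply: bigcup_sup.
pose reached (Z : {set V}) := forall z, z \in Z -> connect (induced T U) x z.
have reachedX : reached X.
  by move=> z zX; apply: connect_induced_subset (subU _ XF) (conF _ XF _ _ xX zX).
case/connectP: (famF X Y XF YF) => l Xl ->{Y YF} in yY *.
elim: l X XF {xX} Xl reachedX yY => [|Z l IHl] X XF /=; first by move=> _; apply.
case/andP=> /and3P[_ ZF /set0Pn[c /setIP[cX cZ]]] Zl reachedX.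
apply: IHl Zl _ => // z zZ; apply: connect_trans (reachedX _ cX) _.
exact: connect_induced_subset (subU _ ZF) (conF _ ZF _ _ cZ zZ).
Qed.

Lemma obtainable_connected_in E T S : host_tree E T -> obtainable E S -> connected_in T S.
Proof.
move=> [treeT edges_conn]; have bridges := tree_every_edge_bridge treeT.
elim=> [e eE | A A' _ conA _ conA' _ | F _ _ conF famF].
- exact: edges_conn.
- exact: connected_inI.
- exact: connected_in_bigcup.
Qed.

Lemma comp_edge_connected_in E T S : host_tree E T -> comp_edge E S -> connected_in T S.
Proof.
move=> hostT [-> | [/eqP/cards1P[z ->] | [_ obtS]]].
- move=> x y _ _; apply: connect_sub (hostT.1.2.1 x y) => s t st.
  by apply/connect1/and3P; rewrite !inE.
- by move=> x y /set1P-> /set1P->; apply: connect0.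
- exact: obtainable_connected_in obtS.
Qed.

Lemma host_path_sub E T B u v w : host_tree E T -> comp_edge E B ->
  u \in B -> v \in B -> on_path T u v w -> w \in B.
Proof.
move=> hostT compB uB vB [p [up lastv uniq_p wp]].
have bridges := tree_every_edge_bridge hostT.1.
have conB := comp_edge_connected_in hostT compB.
by apply: (allP (connected_in_convex bridges conB up uniq_p uB _)); rewrite ?lastv.
Qed.

Section Exchange.
Variables (T : {set {set V}}) (a b x1 x2 : V).
Hypotheses (treeT : is_tree T) (abT : gadj T a b).
Local Notation F := (T :\ [set a; b]).
Hypotheses (x1a : connect (gadj F) x1 a) (x2b : connect (gadj F) x2 b).
Local Notation T' := (F :|: [set [set x1; x2]]).

Lemma gadj_exchange x y : gadj T' x y = gadj F x y || ([set x; y] == [set x1; x2]).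
Proof. by rewrite /gadj in_setU in_set1. Qed.

Lemma cut_sub_exchange : subrel (gadj F) (gadj T').
Proof. by move=> x y xy; rewrite gadj_exchange xy. Qed.

Lemma connect_cut_exchange x y : connect (gadj F) x y -> connect (gadj T') x y.
Proof. by apply: connect_sub => s t /cut_sub_exchange/connect1. Qed.

Lemma gadj_cut_cases x y : gadj T x y -> gadj F x y \/ (x = a /\ y = b) \/ (x = b /\ y = a).
Proof.
move=> xy; have [/eq_set2_cases|neq_ab] := eqVneq [set x; y] [set a; b]; first by right.
by left; rewrite gadj_setD1 neq_ab.
Qed.

Lemma cut_sides_disjoint z : connect (gadj F) z a -> connect (gadj F) z b -> False.
Proof.
move=> za zb; apply: (tree_every_edge_bridge treeT abT).
by rewrite connect_gadj_sym in za; apply: connect_trans za zb.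
Qed.

Lemma cut_sides z : connect (gadj F) z a \/ connect (gadj F) z b.
Proof.
have [_ [conT _]] := treeT.
by case: (connect_extra_edge gadj_cut_cases (conT z a)) => [|[]|[]]; auto.
Qed.

Lemma exchange_edge_neq : x1 != x2.
Proof. by apply/eqP => eq_x12; apply: (@cut_sides_disjoint x1); rewrite // eq_x12. Qed.

Lemma exchange_every_edge_bridge : every_edge_bridge T'.
Proof.
move=> c d cd; have [eq_cd | neq_cd] := eqVneq [set c; d] [set x1; x2].
  move=> cd_cut; have cdF : connect (gadj F) c d.
    apply: connect_sub cd_cut => y z; rewrite gadj_setD1 gadj_exchange eq_cd.
    by case/andP=> neq /orP[yz | eq_yz]; [apply: connect1 | rewrite eq_yz in neq].
  case: (eq_set2_cases eq_cd) => [[eq_c eq_d] | [eq_c eq_d]]; subst c d.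
    by apply: (@cut_sides_disjoint x1) => //; apply: connect_trans cdF x2b.
  by apply: (@cut_sides_disjoint x2) => //; apply: connect_trans cdF x1a.
have cdF : gadj F c d by move: cd; rewrite gadj_exchange (negPf neq_cd) orbF.
have split_cut y z : gadj (T' :\ [set c; d]) y z ->
    gadj (F :\ [set c; d]) y z \/ (y = x1 /\ z = x2) \/ (y = x2 /\ z = x1).
  rewrite gadj_setD1 gadj_exchange => /andP[neq /orP[yz | /eqP/eq_set2_cases]]; last by right.
  by left; rewrite gadj_setD1 neq.
have cut_cd y z : connect (gadj (F :\ [set c; d])) y z -> connect (gadj F) y z.
  by apply: connect_sub => s t /gadj_setD1_sub/connect1.
have cF := connect1 cdF.
move=> /(connect_extra_edge split_cut) [cd_cut | [cx1 x2d] | [cx2 x1d]].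
- apply: (tree_every_edge_bridge treeT (gadj_setD1_sub cdF)).
  apply: connect_sub cd_cut => s t; rewrite gadj_setD1 => /andP[neq /gadj_setD1_sub st].
  by apply: connect1; rewrite gadj_setD1 neq.
- apply: (@cut_sides_disjoint c); first exact: connect_trans (cut_cd _ _ cx1) x1a.
  rewrite connect_gadj_sym in x2d.
  exact: connect_trans cF (connect_trans (cut_cd _ _ x2d) x2b).
- apply: (@cut_sides_disjoint c); last exact: connect_trans (cut_cd _ _ cx2) x2b.
  rewrite connect_gadj_sym in x1d.
  exact: connect_trans cF (connect_trans (cut_cd _ _ x1d) x1a).
Qed.

Lemma exchange_tree : is_tree T'.
Proof.
have [edge2 _] := treeT; split; last split.
- move=> e; rewrite in_setU in_set1 => /orP[/setD1P[_ /edge2] // | /eqP->].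
  by rewrite cards2 exchange_edge_neq.
- have bx2 : connect (gadj T') b x2 by apply: connect_cut_exchange; rewrite connect_gadj_sym.
  have x2x1 : gadj T' x2 x1 by rewrite gadj_sym gadj_exchange eqxx orbT.
  have ba := connect_trans bx2 (connect_trans (connect1 x2x1) (connect_cut_exchange x1a)).
  have to_a z : connect (gadj T') z a.
    case: (cut_sides z) => [/connect_cut_exchange // | /connect_cut_exchange zb].
    exact: connect_trans zb ba.
  by move=> x y; apply: connect_trans (to_a x) _; rewrite connect_gadj_sym.
- exact: every_edge_bridge_acyclic exchange_every_edge_bridge.
Qed.

Lemma exchange_connected_in e : connected_in T e ->
  (a \in e -> b \in e -> x1 \in e /\ x2 \in e) -> connected_in T' e.
Proof.
move=> conTe x12_in_e x y xe ye.
have cut_exchange s t : connect (induced F e) s t -> connect (induced T' e) s t.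
  apply: connect_sub => s' t' /and3P[st se te]; apply: connect1.
  by apply/and3P; rewrite cut_sub_exchange.
have isym : connect_sym (induced T' e) by apply/sym_connect_sym/induced_sym.
have [/andP[ae be] | not_ab] := boolP ((a \in e) && (b \in e)); last first.
  apply: cut_exchange; apply: connect_sub (conTe x y xe ye) => s t /and3P[st se te].
  apply: connect1; case: (gadj_cut_cases st) => [stF | [[eq_s eq_t] | [eq_s eq_t]]].
  - exact/and3P.
  - by subst s t; rewrite se te in not_ab.
  - by subst s t; rewrite se te in not_ab.
have [x1e x2e] := x12_in_e ae be.
have split_e s t : induced T e s t ->
    induced F e s t \/ (s = a /\ t = b) \/ (s = b /\ t = a).
  by case/and3P=> st se te; case: (gadj_cut_cases st) => [stF|]; [left; apply/and3P | right].
have side_e z : z \in e -> connect (induced F e) z a \/ connect (induced F e) z b.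
  by move=> ze; case: (connect_extra_edge split_e (conTe z a ze ae)) => [|[]|[]]; auto.
have induced_cut s t : connect (induced F e) s t -> connect (gadj F) s t.
  by apply: connect_sub => s' t' /induced_sub_gadj/connect1.
have x1a_e : connect (induced F e) x1 a.
  by case: (side_e x1 x1e) => // /induced_cut x1b; case: (cut_sides_disjoint x1a x1b).
have x2b_e : connect (induced F e) x2 b.
  by case: (side_e x2 x2e) => // /induced_cut x2a; case: (cut_sides_disjoint x2a x2b).
have ba : connect (induced T' e) b a.
  apply: connect_trans (_ : connect _ b x2) _; first by rewrite isym; apply: cut_exchange.
  apply: connect_trans (cut_exchange _ _ x1a_e); apply: connect1; apply/and3P.
  by rewrite gadj_sym gadj_exchange eqxx orbT.
have to_a z : z \in e -> connect (induced T' e) z a.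
  by move=> ze; case: (side_e z ze) => /cut_exchange // zb; apply: connect_trans zb ba.
by apply: connect_trans (to_a x xe) _; rewrite isym; apply: to_a.
Qed.

Lemma exchange_host_tree E : host_tree E T ->
  (forall e, e \in E -> a \in e -> b \in e -> x1 \in e /\ x2 \in e) -> host_tree E T'.
Proof.
move=> [_ conE] x12_in_e; split=> [|e eE]; first exact: exchange_tree.
exact: (exchange_connected_in (conE e eE) (x12_in_e e eE)).
Qed.

Lemma exchange_on_path u v w : connect (gadj F) u a -> connect (gadj F) v b ->
  w \in [set x1; x2] -> on_path T' u v w.
Proof.
move=> ua vb wx12.
have ux1 : connect (gadj F) u x1 by apply: connect_trans ua _; rewrite connect_gadj_sym.
have x2v : connect (gadj F) x2 v by apply: connect_trans x2b _; rewrite connect_gadj_sym.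
case/connectP: ux1 => q1' /shortenP[q1 uq1 uniq_q1 _] lastx1.
case/connectP: x2v => q2' /shortenP[q2 x2q2 uniq_q2 _] lastv.
exists (q1 ++ x2 :: q2); split.
- rewrite cat_path (sub_path cut_sub_exchange uq1) /= -lastx1 gadj_exchange eqxx orbT.
  by rewrite andTb (sub_path cut_sub_exchange x2q2).
- by rewrite last_cat lastv.
- rewrite -cat_cons cat_uniq uniq_q1 uniq_q2 andbT andTb.
  apply/hasPn => z /(path_connect x2q2) x2z; apply/negP => /(path_connect uq1) uz.
  rewrite connect_gadj_sym in uz; rewrite connect_gadj_sym in x2z.
  exact: (@cut_sides_disjoint z) (connect_trans uz ua) (connect_trans x2z x2b).
- case/set2P: wx12 => ->; first by rewrite -cat_cons mem_cat lastx1 mem_last.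
  by rewrite -cat_cons mem_cat mem_head orbT.
Qed.

End Exchange.

Lemma host_path_through E T a b u v w : host_tree E T -> gadj T a b ->
  connect (gadj (T :\ [set a; b])) u a -> connect (gadj (T :\ [set a; b])) v b ->
  (forall e, e \in E -> a \in e -> b \in e -> w \in e) ->
  exists T', host_tree E T' /\ on_path T' u v w.
Proof.
move=> hostT abT ua vb w_in_e; have treeT := hostT.1.
case: (cut_sides a b treeT w) => [wa | wb].
- exists (T :\ [set a; b] :|: [set [set w; b]]); split.
  + by apply: exchange_host_tree => // e eE ae be; rewrite w_in_e.
  + by apply: exchange_on_path; rewrite ?set21.
- exists (T :\ [set a; b] :|: [set [set a; w]]); split.
  + by apply: exchange_host_tree => // e eE ae be; rewrite w_in_e.
  + by apply: exchange_on_path; rewrite ?set22.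
Qed.

Lemma tree_edge_leaving T (R : rel V) u v : is_tree T -> ~~ connect R u v ->
  exists a b, [/\ gadj T a b, ~~ connect R a b,
    connect (gadj (T :\ [set a; b])) u a & connect (gadj (T :\ [set a; b])) v b].
Proof.
case=> _ [conT _] nuv.
case/connectP: (conT u v) => p0 /shortenP[p up uniq_p _] lastv.
have has_p : has (fun y => ~~ connect R u y) p.
  move: nuv; rewrite lastv; case: p {up uniq_p lastv} => [|y p]; first by rewrite connect0.
  by move=> nuy; apply/hasP; exists (last y p); rewrite ?mem_last.
case: (split_find has_p) up uniq_p lastv => b p1 p2 nub /hasPn p1R up uniq_p lastv.
set a := last u p1.
have uR z : z \in u :: p1 -> connect R u z.
  by rewrite in_cons => /predU1P[-> | /p1R/negbNE].
have nab : ~~ connect R a b.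
  by apply: contra nub; apply: connect_trans; apply/uR/mem_last.
move: up; rewrite cat_path last_rcons rcons_path => /andP[/andP[up1 ab] bp2].
move: uniq_p; rewrite -cat_cons -rcons_cons cat_uniq rcons_uniq => /and3P[/andP[bNp1 _] p1Np2 _].
have aNp2 : a \notin b :: p2.
  rewrite in_cons negb_or; apply/andP; split.
    by apply: contraNneq bNp1 => <-; apply: mem_last.
  by apply: contra p1Np2 => ap2; apply/hasP; exists a; rewrite // mem_rcons in_cons mem_last orbT.
exists a, b; split => //.
- by apply/connectP; exists p1; rewrite ?path_setD1_avoid.
- rewrite connect_gadj_sym; apply/connectP.
  exists p2; last by rewrite lastv last_cat last_rcons.
  by rewrite set2C path_setD1_avoid.
Qed.

End HostTrees.

Theorem mainTheorem17 (V : finType) (E : {set {set V}}) (B : {set V}) (u v : V) :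
  set0 \notin E ->
  hypertree E ->
  basic_set E B ->
  u \in B -> v \in B ->
  ~~ connect (two_section (bar_edges E B)) u v ->
  forall w : V, w \in B <-> exists T, host_tree E T /\ on_path T u v w.
Proof.
move=> _ [T hostT] [compB _ _] uB vB nuv w.
split=> [wB | [T' [hostT' uvw]]]; last exact: host_path_sub hostT' compB uB vB uvw.
have [a [b [abT nab ua vb]]] := tree_edge_leaving hostT.1 nuv.
have neq_ab : a != b by apply: contraNneq nab => ->.
apply: host_path_through hostT abT ua vb _ => e eE ae be.
apply: (subsetP _ _ wB); apply: contraNT nab => Be; apply: connect1.
by rewrite /two_section neq_ab; apply/existsP; exists e; rewrite !inE eE Be ae be.
Qed.
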